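(* Let $G$ be a graph, let $X,Y$ be disjoint subsets of $V(G)$, and let $K_1,K_2$ be two minimal $X-Y$ separators. Let $K_1^t=K_1 \cap NR(G,Y,K_2)$, $K_1^b=(K_1 \setminus K_1^t) \setminus (K_1 \cap K_2)$, $K_2^t=K_2 \cap NR(G,Y,K_1)$, $K_2^b=(K_2 \setminus K_2^t) \setminus (K_1 \cap K_2)$, and let $Top(K_1,K_2)=K_1^t \cup K_2^t \cup (K_1 \cap K_2)$ and $Bottom(K_1,K_2)=K_1^b \cup K_2^b \cup (K_1 \cap K_2)$. Then both $Top(K_1,K_2)$ and $Bottom(K_1,K_2)$ are $X-Y$ separators. Moreover, $Bottom(K_1,K_2) \geq K_1$ and $Bottom(K_1,K_2) \geq K_2$.
   Context: $G$ is a finite undirected graph. For disjoint $X,Y \subseteq V(G)$, an $X-Y$ separator is a set $K \subseteq V(G) \setminus (X \cup Y)$ such that $G \setminus K$ (the subgraph induced by $V(G)\setminus K$) contains no path from a vertex of $X$ to a vertex of $Y$; it is minimal if it is minimal under inclusion. For disjoint $A,B \subseteq V(G)$, $NR(G,A,B)$ denotes the set of vertices of $G$ that are not reachable from $A$ in $G \setminus B$. For $X-Y$ separators $K,K'$, we write $K \geq K'$ if $NR(G,Y,K) \supseteq NR(G,Y,K')$. *)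

From mathcomp Require Import all_boot.
Set Implicit Arguments. Unset Strict Implicit. Unset Printing Implicit Defensive.

Definition undirected (T : finType) (e : rel T) := symmetric e.

Definition del_rel (T : finType) (e : rel T) (B : {set T}) : rel T :=
  [rel u v | [&& e u v, u \notin B & v \notin B]].

Definition reach (T : finType) (e : rel T) (B : {set T}) (a v : T) : bool :=
  [&& a \notin B, v \notin B & connect (del_rel e B) a v].

Definition NR (T : finType) (e : rel T) (A B : {set T}) : {set T} :=
  [set v | ~~ [exists a in A, reach e B a v]].

Definition separator (T : finType) (e : rel T) (X Y K : {set T}) : Prop :=
  [disjoint K & X :|: Y] /\
  forall x y, x \in X -> y \in Y -> ~~ reach e K x y.

Definition minimal_separator (T : finType) (e : rel T) (X Y K : {set T}) : Prop :=
  separator e X Y K /\ forall K' : {set T}, K' \proper K -> ~ separator e X Y K'.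

Definition sep_ge (T : finType) (e : rel T) (Y K K' : {set T}) : Prop :=
  NR e Y K' \subset NR e Y K.

Definition K_top (T : finType) (e : rel T) (Y K1 K2 : {set T}) := K1 :&: NR e Y K2.
Definition K_bot (T : finType) (e : rel T) (Y K1 K2 : {set T}) :=
  (K1 :\: K_top e Y K1 K2) :\: (K1 :&: K2).

Definition Top (T : finType) (e : rel T) (Y K1 K2 : {set T}) :=
  K_top e Y K1 K2 :|: K_top e Y K2 K1 :|: (K1 :&: K2).
Definition Bottom (T : finType) (e : rel T) (Y K1 K2 : {set T}) :=
  K_bot e Y K1 K2 :|: K_bot e Y K2 K1 :|: (K1 :&: K2).

From mathcomp Require Import all_boot.
Set Implicit Arguments. Unset Strict Implicit.

(* A walk avoiding Top (resp. Bottom) that starts in X (resp. Y) either avoids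
   K1 :|: K2 altogether, contradicting that K1 separates, or first enters
   K1 :|: K2 at some w outside Top (resp. Bottom).  Up to w the walk avoids
   K1 :|: K2, so if, say, w lies in K1 only, then w is reachable from the start
   in G \ K2.  From X this puts w into NR(G,Y,K2), since K2 separates, so w is
   in Top; from Y it keeps w out of NR(G,Y,K2), so w is in Bottom.  The same
   first-entry argument from Y shows that every vertex reachable from Y in
   G \ Bottom is already reachable from Y in G \ (K1 :|: K2), which gives
   Bottom >= K1 and Bottom >= K2. *)

Section Reachability.

Variables (T : finType) (e : rel T).

Lemma reach_subset (K K' : {set T}) a v :
  K \subset K' -> reach e K' a v -> reach e K a v.
Proof.
move=> sKK' /and3P [aK' vK' c].
have notK x : x \notin K' -> x \notin K by apply: contra; apply: (subsetP sKK').
rewrite /reach !notK //=; apply: connect_sub c => x y /and3P [exy xK' yK'].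
by apply: connect1; rewrite /del_rel /= exy !notK.
Qed.

Lemma reach_refl (K : {set T}) a : a \notin K -> reach e K a a.
Proof. by move=> aK; rewrite /reach aK connect0. Qed.

Lemma reach_trans (K : {set T}) a b c :
  reach e K a b -> reach e K b c -> reach e K a c.
Proof.
move=> /and3P [aK _ cab] /and3P [_ cK cbc].
by rewrite /reach aK cK (connect_trans cab cbc).
Qed.

Lemma reach_edge (K : {set T}) a u w :
  reach e K a u -> e u w -> w \notin K -> reach e K a w.
Proof.
move=> rau euw wK; apply: (reach_trans rau).
have uK : u \notin K by case/and3P: rau.
by rewrite /reach uK wK connect1 //= /del_rel /= euw uK wK.
Qed.

Lemma reach_sym (K : {set T}) a v :
  symmetric e -> reach e K a v = reach e K v a.
Proof.
move=> sym_e; rewrite /reach andbCA; congr (_ && (_ && _)).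
apply: sym_connect_sym => x y; rewrite /del_rel /= sym_e.
by rewrite [(x \notin K) && _]andbC.
Qed.

Definition enters (C : {set T}) (a w : T) : Prop :=
  exists2 u, reach e C a u & e u w.

Lemma enters_reach (C K : {set T}) a w :
  enters C a w -> K \subset C -> w \notin K -> reach e K a w.
Proof.
by case=> u rau euw sKC wK; apply: reach_edge (reach_subset sKC rau) euw wK.
Qed.

Lemma reach_first_entry (S C : {set T}) a v :
  reach e S a v -> a \notin C ->
  reach e C a v \/ exists2 w, w \in C :\: S & enters C a w.
Proof.
case/and3P=> aS _ /connectP [p]; elim: p a aS => [|z p IHp] a aS /=.
  by move=> _ -> aC; left; apply: reach_refl.
case/andP=> /and3P [eaz _ zS] pz vz aC.
have raa : reach e C a a by apply: reach_refl.
have [zC | zC] := boolP (z \in C).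
  by right; exists z; [rewrite inE zS | exists a].
have raz : reach e C a z by apply: reach_edge raa eaz zC.
case: (IHp z zS pz vz zC) => [rzv | [w wCS [u rzu euw]]].
  by left; apply: reach_trans raz rzv.
by right; exists w => //; exists u => //; apply: reach_trans raz rzu.
Qed.

End Reachability.

Section Separators.

Variables (T : finType) (e : rel T).
Hypothesis sym_e : symmetric e.

Lemma separator_sym (X Y K : {set T}) :
  separator e X Y K -> separator e Y X K.
Proof.
case=> dK sepK; split; first by rewrite setUC.
by move=> y x yY xX; rewrite reach_sym //; apply: sepK.
Qed.

Lemma separator_reach_NR (X Y K : {set T}) x w :
  separator e X Y K -> x \in X -> reach e K x w -> w \in NR e Y K.
Proof.
case=> _ sepK xX rxw; rewrite inE; apply/existsP=> -[y /andP [yY ryw]].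
by move/negP: (sepK x y xX yY); apply; rewrite (reach_trans rxw) // reach_sym.
Qed.

Lemma reach_notin_NR (Y K : {set T}) y w :
  y \in Y -> reach e K y w -> w \notin NR e Y K.
Proof.
by move=> yY ryw; rewrite inE negbK; apply/existsP; exists y; rewrite yY.
Qed.

Lemma K_top_of_reach (X Y K1 K2 : {set T}) x w :
  separator e X Y K2 -> x \in X -> w \in K1 ->
  reach e K2 x w -> w \in K_top e Y K1 K2.
Proof.
by move=> sep2 xX wK1 rxw; rewrite inE wK1 (separator_reach_NR sep2 xX rxw).
Qed.

Lemma K_bot_of_reach (Y K1 K2 : {set T}) y w :
  y \in Y -> w \in K1 -> reach e K2 y w -> w \in K_bot e Y K1 K2.
Proof.
move=> yY wK1 ryw; have wK2 : w \notin K2 by case/and3P: ryw.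
by move: (reach_notin_NR yY ryw); rewrite !inE wK1 (negbTE wK2) andbT.
Qed.

Lemma separator_of_entries (X Y C K S : {set T}) :
  [disjoint C & X :|: Y] -> K \subset C -> separator e X Y K -> S \subset C ->
  (forall x w, x \in X -> w \in C -> enters e C x w -> w \in S) ->
  separator e X Y S.
Proof.
move=> dC sKC [_ sepK] sSC entryS; split; first exact: disjointWl dC.
move=> x y xX yY; apply/negP=> rxy.
have xC : x \notin C by rewrite (disjointFl dC) // inE xX.
case: (reach_first_entry rxy xC) => [rCxy | [w /setDP [wC wS] entw]].
  by move/negP: (sepK x y xX yY); apply; apply: reach_subset sKC rCxy.
by rewrite (entryS x w) in wS.
Qed.

Lemma sep_ge_of_entries (Y C K S : {set T}) :
  [disjoint C & Y] -> K \subset C ->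
  (forall y w, y \in Y -> w \in C -> enters e C y w -> w \in S) ->
  sep_ge e Y S K.
Proof.
move=> dC sKC entryS; apply/subsetP=> v; rewrite !inE; apply: contra.
case/existsP=> y /andP [yY ryv]; apply/existsP; exists y; rewrite yY /=.
have yC : y \notin C by rewrite (disjointFl dC).
case: (reach_first_entry ryv yC) => [rCyv | [w /setDP [wC wS] entw]].
  exact: reach_subset sKC rCyv.
by rewrite (entryS y w) in wS.
Qed.

End Separators.

Section TopBottom.

Variables (T : finType) (e : rel T) (X Y K1 K2 : {set T}).

Lemma Top_subset : Top e Y K1 K2 \subset K1 :|: K2.
Proof.
by apply/subsetP=> w; rewrite !inE; case: (w \in K1); case: (w \in K2);
  rewrite ?andbF.
Qed.

Lemma Bottom_subset : Bottom e Y K1 K2 \subset K1 :|: K2.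
Proof.
by apply/subsetP=> w; rewrite !inE; case: (w \in K1); case: (w \in K2);
  rewrite ?andbF.
Qed.

Lemma entry_in_Bottom y w :
  y \in Y -> w \in K1 :|: K2 -> enters e (K1 :|: K2) y w ->
  w \in Bottom e Y K1 K2.
Proof.
move=> yY wK entw; rewrite /Bottom !in_setU.
have [wK12 | wK12] := boolP (w \in K1 :&: K2); first by apply/orP; right.
rewrite in_setI in wK12; case/setUP: wK => wK.
  have wK2 : w \notin K2 by rewrite wK in wK12.
  rewrite (K_bot_of_reach yY wK) //.
  exact: enters_reach entw (subsetUr _ _) wK2.
have wK1 : w \notin K1 by rewrite wK andbT in wK12.
rewrite (K_bot_of_reach (K1 := K2) yY wK) ?orbT //.
exact: enters_reach entw (subsetUl _ _) wK1.
Qed.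

Hypothesis sym_e : symmetric e.
Hypotheses (sep1 : separator e X Y K1) (sep2 : separator e X Y K2).

Lemma entry_in_Top x w :
  x \in X -> w \in K1 :|: K2 -> enters e (K1 :|: K2) x w -> w \in Top e Y K1 K2.
Proof.
move=> xX wK entw; rewrite /Top !in_setU.
have [wK12 | wK12] := boolP (w \in K1 :&: K2); first by apply/orP; right.
rewrite in_setI in wK12; case/setUP: wK => wK.
  have wK2 : w \notin K2 by rewrite wK in wK12.
  rewrite (K_top_of_reach sym_e sep2 xX wK) //.
  exact: enters_reach entw (subsetUr _ _) wK2.
have wK1 : w \notin K1 by rewrite wK andbT in wK12.
rewrite (K_top_of_reach (K1 := K2) sym_e sep1 xX wK) ?orbT //.
exact: enters_reach entw (subsetUl _ _) wK1.
Qed.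

End TopBottom.

Theorem proposition2 (T : finType) (e : rel T) (X Y K1 K2 : {set T}) :
  undirected e ->
  [disjoint X & Y] ->
  minimal_separator e X Y K1 ->
  minimal_separator e X Y K2 ->
  [/\ separator e X Y (Top e Y K1 K2),
      separator e X Y (Bottom e Y K1 K2),
      sep_ge e Y (Bottom e Y K1 K2) K1
    & sep_ge e Y (Bottom e Y K1 K2) K2].
Proof.
move=> sym_e _ [sep1 _] [sep2 _].
have dC : [disjoint K1 :|: K2 & X :|: Y].
  by rewrite -setI_eq0 setIUl setU_eq0 !setI_eq0 sep1.1 sep2.1.
have dCY : [disjoint K1 :|: K2 & Y] by apply: disjointWr dC; apply: subsetUr.
have entryB := @entry_in_Bottom T e Y K1 K2.
split.
- exact: separator_of_entries dC (subsetUl _ _) sep1 (Top_subset _ _ _ _)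
    (entry_in_Top sym_e sep1 sep2).
- apply: (separator_sym sym_e); rewrite [X :|: Y]setUC in dC.
  exact: separator_of_entries dC (subsetUl _ _) (separator_sym sym_e sep1)
    (Bottom_subset _ _ _ _) entryB.
- exact: sep_ge_of_entries dCY (subsetUl _ _) entryB.
- exact: sep_ge_of_entries dCY (subsetUr _ _) entryB.
Qed.
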